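(* Let $(X,\tau)$ be a compact space and $(Y,\sigma)$ a kd-space. Then every continuous function $f\colon (X,\tau)\to(Y,\sigma)$ is perfect and super-closed. Consequently every continuous bijection $f\colon X\to Y$ is a homeomorphism, and every super-continuous bijection $f\colon X\to Y$ is a super-homeomorphism.
   Context: A space is a kd-space if every compact subset is $\delta$-closed, where: $U$ is regular open if $U=\mathrm{Int}(\mathrm{Cl}(U))$; $x$ is a $\delta$-cluster point of $B$ if $B\cap U\ne\emptyset$ for every regular open $U\ni x$; $B$ is $\delta$-closed if it contains all its $\delta$-cluster points; complements of $\delta$-closed sets are $\delta$-open. A continuous map is perfect if it is closed and has compact fibers. A function $f$ is super-closed if the image of every closed subset of $X$ is $\delta$-closed in $Y$, and super-continuous if the preimage of every open subset of $Y$ is $\delta$-open in $X$. A bijection is a super-homeomorphism if it is both super-closed and super-continuous. *)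

From mathcomp Require Import all_boot all_classical topology.
Set Implicit Arguments. Unset Strict Implicit. Unset Printing Implicit Defensive.
Local Open Scope classical_set_scope.

Section Delta.
Context {T : topologicalType}.

Definition regular_open (U : set T) : Prop := U = interior (closure U).

Definition delta_cluster (B : set T) (x : T) : Prop :=
  forall U : set T, regular_open U -> U x -> B `&` U !=set0.

Definition delta_closed (B : set T) : Prop :=
  forall x, delta_cluster B x -> B x.

Definition delta_open (A : set T) : Prop := delta_closed (~` A).

Definition kd_space : Prop :=
  forall K : set T, compact K -> delta_closed K.

End Delta.

Arguments kd_space T : clear implicits.

Section Maps.
Context {X Y : topologicalType}.

Definition closed_map (f : X -> Y) : Prop :=
  forall A : set X, closed A -> closed (f @` A).

Definition perfect_map (f : X -> Y) : Prop :=
  continuous f /\ closed_map f /\ (forall y : Y, compact (f @^-1` [set y])).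

Definition super_closed (f : X -> Y) : Prop :=
  forall A : set X, closed A -> delta_closed (f @` A).

Definition super_continuous (f : X -> Y) : Prop :=
  forall B : set Y, open B -> delta_open (f @^-1` B).

Definition super_homeomorphism (f : X -> Y) : Prop :=
  bijective f /\ super_closed f /\ super_continuous f.

Definition homeomorphism (f : X -> Y) : Prop :=
  exists g : Y -> X, [/\ cancel f g, cancel g f, continuous f & continuous g].

End Maps.

From mathcomp Require Import all_boot all_classical topology.
Local Open Scope classical_set_scope.

(* Regular open sets are open, so every delta-cluster point is a cluster point
   and delta-closed sets are closed; in particular compact subsets of a
   kd-space are closed.  Closed subsets of the compact space X are compact and
   so are their continuous images, which are therefore delta-closed in Y: a
   continuous f is super-closed, hence closed, and its fibres, preimages of
   compact singletons, are closed in X and thus compact.  A closed continuous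
   bijection is a homeomorphism, and super-continuity implies continuity. *)

Lemma delta_closed_closed {T : topologicalType} {B : set T} :
  delta_closed B -> closed B.
Proof.
move=> dB x clx; apply: dB => U rU Ux.
have oU : open U by rewrite rU; exact: open_interior.
exact: clx (open_nbhs_nbhs (conj oU Ux)).
Qed.

Lemma delta_open_open {T : topologicalType} {A : set T} :
  delta_open A -> open A.
Proof. by move=> /delta_closed_closed; rewrite closedC. Qed.

Lemma kd_compact_closed {T : topologicalType} {K : set T} :
  kd_space T -> compact K -> closed K.
Proof. by move=> kdT cK; apply: delta_closed_closed; exact: kdT. Qed.

Section Maps.
Variables X Y : topologicalType.
Implicit Type f : X -> Y.

Lemma super_continuous_continuous f : super_continuous f -> continuous f.
Proof. by move=> sf; apply/continuousP => B oB; apply: delta_open_open; exact: sf. Qed.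

Lemma super_closed_closed_map f : super_closed f -> closed_map f.
Proof. by move=> sf A cA; apply: delta_closed_closed; exact: sf. Qed.

Lemma continuous_bijective_closed_map_homeomorphism f :
  continuous f -> closed_map f -> bijective f -> homeomorphism f.
Proof.
move=> cf clf [g fK gK]; exists g; split=> //.
apply/continuous_closedP => A cA.
suff -> : g @^-1` A = f @` A by exact: clf.
apply/seteqP; split=> y.
  by move=> Agy; exists (g y) => //; rewrite gK.
by case=> x Ax <-; rewrite /preimage /= fK.
Qed.

Hypothesis compactX : compact [set: X].

Lemma closed_compact (A : set X) : closed A -> compact A.
Proof. by move=> cA; exact: subclosed_compact cA compactX (@subsetT _ A). Qed.

Lemma continuous_closed_image_compact f (A : set X) :
  continuous f -> closed A -> compact (f @` A).
Proof.
move=> cf cA; apply: continuous_compact; last exact: closed_compact.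
exact: continuous_subspaceT.
Qed.

Hypothesis kdY : kd_space Y.

Lemma continuous_super_closed f : continuous f -> super_closed f.
Proof. by move=> cf A cA; apply: kdY; exact: continuous_closed_image_compact. Qed.

Lemma continuous_perfect_map f : continuous f -> perfect_map f.
Proof.
move=> cf; split=> //; split.
  exact/super_closed_closed_map/continuous_super_closed.
move=> y; apply: closed_compact; apply: (proj1 (continuous_closedP f) cf).
exact: kd_compact_closed kdY (@compact_set1 _ y).
Qed.

End Maps.

Theorem mainTheorem7 (X Y : topologicalType)
  (hX : compact [set: X]) (hY : kd_space Y) :
  [/\ (forall f : X -> Y, continuous f -> perfect_map f /\ super_closed f),
      (forall f : X -> Y, continuous f -> bijective f -> homeomorphism f)
    & (forall f : X -> Y, super_continuous f -> bijective f ->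
         super_homeomorphism f)].
Proof.
split=> f.
- by move=> cf; split; [exact: continuous_perfect_map | exact: continuous_super_closed].
- move=> cf; apply: continuous_bijective_closed_map_homeomorphism => //.
  exact/super_closed_closed_map/continuous_super_closed.
- move=> sf bf; split=> //; split=> //.
  exact/continuous_super_closed/super_continuous_continuous.
Qed.
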